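(* Let $\mathcal{U}$ be a UEC-representative and let $\mathcal{D}$ be a maximal DAG in the UEC of $\mathcal{U}$. Then for nodes $v,x,w$, the path $(v,x,w)$ is a v-structure $v\to x\leftarrow w$ in $\mathcal{D}$ if and only if there exist cliques $C_1,C_2\in\mathcal{E}^\mathcal{U}$ with $v,x\in C_1$, $w\notin C_1$, $w,x\in C_2$, $v\notin C_2$, and every clique in $\mathcal{E}^\mathcal{U}$ containing $v$ or $w$ also contains $x$.
   Context: For a DAG $\mathcal{D}$, a trek is a path with no repeated vertices and no collider; the unconditional dependence graph $\mathcal{U}^\mathcal{D}$ has an edge between distinct $v,w$ iff there is a trek between them. A UEC-representative is an undirected graph $\mathcal{U}$ with $\mathcal{U}=\mathcal{U}^\mathcal{D}$ for some DAG $\mathcal{D}$ on the same vertex set; the UEC of $\mathcal{U}$ is $\{\mathcal{D}:\mathcal{U}^\mathcal{D}=\mathcal{U}\}$. A DAG $\mathcal{D}$ in this UEC is maximal if every DAG obtained from $\mathcal{D}$ by adding one edge is not in the UEC. An edge clique cover is a collection of cliques covering every vertex and edge; $\mathcal{E}^\mathcal{U}$ denotes the unique minimum-cardinality edge clique cover of the UEC-representative $\mathcal{U}$ (it equals $\{\mathrm{ne}_\mathcal{U}[m]:m\in M\}$ for any maximum independent set $M$, with $\mathrm{ne}_\mathcal{U}[m]$ the closed neighborhood). A v-structure is $v\to x\leftarrow w$ with $v,w$ nonadjacent. *)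

From mathcomp Require Import all_boot.
Set Implicit Arguments. Unset Strict Implicit. Unset Printing Implicit Defensive.

Section Graphs.
Variable T : finType.

(* A directed graph on T is d : rel T, with d x y meaning x -> y.
   An undirected graph is U : rel T (U x y means x - y). *)

Definition acyclic (d : rel T) : Prop :=
  forall x y : T, d x y -> ~~ connect d y x.

Definition adjD (d : rel T) : rel T := fun x y => d x y || d y x.

Fixpoint nocollider (d : rel T) (s : seq T) : bool :=
  match s with
  | a :: ((b :: c :: _) as t) => ~~ (d a b && d c b) && nocollider d t
  | _ => true
  end.

Definition is_trek (d : rel T) (v w : T) (s : seq T) : Prop :=
  [/\ path (adjD d) v s, last v s = w, uniq (v :: s) & nocollider d (v :: s)].

Definition inUEC (U : rel T) (d : rel T) : Prop :=
  acyclic d /\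
  forall v w : T, U v w <-> (v != w /\ exists s, is_trek d v w s).

Definition UEC_rep (U : rel T) : Prop := exists d, inUEC U d.

Definition add_edge (d : rel T) (a b : T) : rel T :=
  fun x y => d x y || ((x == a) && (y == b)).

Definition maximal_in_UEC (U : rel T) (d : rel T) : Prop :=
  inUEC U d /\
  forall a b : T, a != b -> ~~ d a b -> ~ inUEC U (add_edge d a b).

Definition is_clique (U : rel T) (C : {set T}) : Prop :=
  forall x y, x \in C -> y \in C -> x != y -> U x y.

Definition edge_clique_cover (U : rel T) (E : {set {set T}}) : Prop :=
  [/\ forall C, C \in E -> is_clique U C,
      forall x : T, exists2 C, C \in E & x \in C
    & forall x y : T, U x y -> exists2 C, C \in E & (x \in C) && (y \in C)].

(* E is a minimum-cardinality edge clique cover of U (for a UEC-representative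
   this is unique: it is E^U) *)
Definition min_edge_clique_cover (U : rel T) (E : {set {set T}}) : Prop :=
  edge_clique_cover U E /\
  forall E' : {set {set T}}, edge_clique_cover U E' -> #|E| <= #|E'|.

Definition v_structure (d : rel T) (v x w : T) : Prop :=
  [/\ v != w, d v x, d w x & ~~ adjD d v w].

End Graphs.

From mathcomp Require Import all_boot.
Set Implicit Arguments. Unset Strict Implicit. Unset Printing Implicit Defensive.

(* Treks of an acyclic [d] are exactly the witnesses of common ancestors, so
   [U v w] holds iff [v != w] and [v], [w] have a common (w.l.o.g. source)
   ancestor. Consequently the cliques of the minimum edge clique cover are the
   descendant sets of the sources of [d]. Adding [a -> b] keeps [d] in the UEC
   as soon as [b] is not an ancestor of [a] and every source above [a] is above
   [b]; in a maximal [d] such an edge is therefore already present. For a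
   v-structure this yields a source above [v] but not [w] and one above [w]
   but not [v]; conversely, the clique conditions force [v -> x] and [w -> x]. *)

Section Treks.
Variables (T : finType) (d : rel T).

Definition common_ancestor (v w : T) : bool :=
  [exists t, connect d t v && connect d t w].

Definition desc (s : T) : {set T} := [set y | connect d s y].

Definition sources : {set T} := [set s | [forall y, ~~ d y s]].

Lemma nocollider_behead v s : nocollider d (v :: s) -> nocollider d s.
Proof. by case: s => [|a [|b s]] //= /andP[]. Qed.

Lemma nocollider_directed v a s : path (adjD d) v (a :: s) ->
  nocollider d [:: v, a & s] -> d v a -> connect d v (last a s).
Proof.
elim: s v a => [|b s IHs] v a; first by move=> _ _ dva; exact: connect1.
rewrite /= => /and3P[_ adj_ab p_bs] /andP[no_vab nc] dva.
have dab : d a b by case/orP: adj_ab => // dba; move: no_vab; rewrite dva dba.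
apply: connect_trans (connect1 dva) (IHs a b _ nc dab).
by rewrite /= /adjD dab.
Qed.

Lemma nocollider_common_ancestor v s : path (adjD d) v s ->
  nocollider d (v :: s) -> common_ancestor v (last v s).
Proof.
elim: s v => [|a s IHs] v p nc.
  by apply/existsP; exists v; rewrite connect0.
have /existsP[t /andP[tv ta]] := IHs a (path_sorted p) (nocollider_behead nc).
apply/existsP; case dva: (d v a).
  by exists v; rewrite connect0 (nocollider_directed p nc dva).
have dav : d a v by move: p; rewrite /= /adjD dva => /andP[].
by exists t; rewrite ta (connect_trans tv (connect1 dav)).
Qed.

Lemma trek_common_ancestor v w s : is_trek d v w s -> common_ancestor v w.
Proof. by case=> p <- _ nc; apply: nocollider_common_ancestor. Qed.

Lemma connect_source s t : s \in sources -> connect d t s -> t = s.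
Proof.
rewrite inE => /forallP s_src /connectP[p]; case/lastP: p => [|p z] //.
rewrite rcons_path last_rcons => /andP[_ dz] eq_sz.
by move: (s_src (last t p)); rewrite eq_sz dz.
Qed.

End Treks.

Section Acyclic.
Variables (T : finType) (d : rel T).
Hypothesis d_acyclic : acyclic d.

Lemma connect_antisym x y : connect d x y -> connect d y x -> x = y.
Proof.
move=> /connectP[[|z p] //= /andP[dxz p_zp] ->] cyx.
case/negP: (d_acyclic dxz); apply: connect_trans cyx.
by apply/connectP; exists p.
Qed.

Lemma desc_proper x y : x != y -> connect d x y -> desc d y \proper desc d x.
Proof.
move=> neq_xy cxy; apply/properP; split.
  by apply/subsetP=> z; rewrite !inE; apply: connect_trans.
exists x; rewrite !inE ?connect0 //.
by apply: contra neq_xy => cyx; apply/eqP/connect_antisym.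
Qed.

Lemma directed_nocollider t s : path d t s -> nocollider d (t :: s).
Proof.
elim: s t => [|a [|b s] IHs] t //; rewrite [path _ _ _]/= => /andP[dta p_as].
apply/andP; split; last exact: IHs.
apply/negP=> /andP[_ dba]; case/andP: p_as => dab _.
by case/negP: (d_acyclic dab); apply: connect1.
Qed.

Lemma trek_cons_child u w z s : is_trek d u w s -> d u z -> z \notin u :: s ->
  is_trek d z w (u :: s).
Proof.
case=> p l un nc duz z_new; split => //=.
- by rewrite p /adjD duz orbT.
- by rewrite z_new.
case: s {p l un z_new} nc => [|c s] //= nc; rewrite nc andbT.
by apply/negP=> /andP[dzu _]; case/negP: (d_acyclic duz); apply: connect1.
Qed.

Lemma trek_rev_path u w q s : path d u q -> uniq (u :: q) ->
  {in q, forall y, y \notin u :: s} -> is_trek d u w s ->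
  exists s', is_trek d (last u q) w s'.
Proof.
elim: q u s => [|z q IHq] u s /=; first by exists s.
case/andP=> duz p_zq /andP[_ /andP[z_nq un_q]] disj tr.
have disj' : {in q, forall y, y \notin [:: z, u & s]}.
  move=> y q_y; rewrite in_cons negb_or disj ?inE ?q_y ?orbT // andbT.
  by apply: contraNneq z_nq => <-.
apply: IHq (u :: s) p_zq _ disj' (trek_cons_child tr duz (disj z (mem_head z q))).
by rewrite /= z_nq.
Qed.

Lemma path_connect_last u q y : path d u q -> y \in q -> connect d y (last u q).
Proof.
move=> p q_y; case/splitPr: q / q_y p => q1 q2.
rewrite cat_path last_cat /= => /and3P[_ _ p2].
by apply/connectP; exists q2.
Qed.

Lemma minimal_common_ancestor v w : common_ancestor d v w ->
  exists t, [/\ connect d t v, connect d t w &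
    forall y, connect d t y -> connect d y v -> connect d y w -> y = t].
Proof.
case/existsP=> t0 anc_t0.
case: (arg_minnP (fun t => #|desc d t|)
  (P := fun t => connect d t v && connect d t w) anc_t0) => t /andP[tv tw] t_min.
exists t; split=> // y ty yv yw; apply/eqP; rewrite eq_sym.
apply/negPn/negP=> neq_ty.
have := proper_card (desc_proper neq_ty ty).
by rewrite ltnNge t_min ?yv.
Qed.

Lemma common_ancestor_trek v w : common_ancestor d v w ->
  exists s, is_trek d v w s.
Proof.
case/minimal_common_ancestor=> t [tv tw t_min].
move/connectP: tw t_min => [r0 /shortenP[r p_r un_r _] ->].
move/connectP: tv => [q0 /shortenP[q p_q un_q _] ->] t_min.
have tr : is_trek d t (last t r) r.
  split=> //; last exact: directed_nocollider.
  by apply: sub_path p_r => x y dxy; rewrite /adjD dxy.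
have t_nq : t \notin q by case/andP: un_q.
have disj : {in q, forall y, y \notin t :: r}.
  move=> y q_y; rewrite in_cons negb_or (contraTneq _ q_y) => [|->] //=.
  apply/negP=> r_y.
  have ty : connect d t y by apply: (path_connect p_q); rewrite inE q_y orbT.
  move: t_nq; rewrite -(t_min y ty) ?q_y //.
    exact: path_connect_last p_q q_y.
  exact: path_connect_last p_r r_y.
exact: trek_rev_path p_q un_q disj tr.
Qed.

Lemma exists_source x : exists2 s, s \in sources d & connect d s x.
Proof.
case: (arg_maxnP (fun s => #|desc d s|) (P := connect d ^~ x) (connect0 d x)).
move=> s sx s_max; exists s => //; rewrite inE; apply/forallP=> y.
apply/negP=> dys; have neq_ys : y != s.
  by apply: contraTneq dys => ->; apply/negP=> dss; case/negP: (d_acyclic dss).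
have := s_max y (connect_trans (connect1 dys) sx); rewrite /= leqNgt.
by rewrite (proper_card (desc_proper neq_ys (connect1 dys))).
Qed.

Lemma common_ancestor_sources v w : common_ancestor d v w =
  [exists s in sources d, connect d s v && connect d s w].
Proof.
apply/existsP/existsP=> [[t /andP[tv tw]]|[s /andP[_ sv_sw]]]; last by exists s.
have [s s_src st] := exists_source t.
by exists s; rewrite s_src !(connect_trans st).
Qed.

End Acyclic.

Lemma inUECE (T : finType) (U d : rel T) : inUEC U d <->
  acyclic d /\ forall v w, U v w = (v != w) && common_ancestor d v w.
Proof.
split=> [[d_acyclic UE] | [d_acyclic UE]]; split=> // v w.
  apply/idP/andP=> [/UE[neq_vw [s /trek_common_ancestor]] | [neq_vw]] //.
  by move/(common_ancestor_trek d_acyclic)=> tr; apply/UE.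
rewrite UE; split=> [/andP[neq_vw /(common_ancestor_trek d_acyclic)] | [-> [s]]] //.
exact: trek_common_ancestor.
Qed.

Section UEC.
Variables (T : finType) (U d : rel T).
Hypothesis dU : inUEC U d.

Let d_acyclic : acyclic d := proj1 dU.
Let UE := proj2 ((inUECE U d).1 dU).

Lemma UEC_source s y : s \in sources d -> U s y = (s != y) && (y \in desc d s).
Proof.
move=> s_src; rewrite UE common_ancestor_sources // inE; congr (_ && _).
apply/existsP/idP=> [[t /and3P[_ ts ty]] | sy]; last by exists s; rewrite s_src connect0.
by rewrite -(connect_source s_src ts).
Qed.

Lemma UEC_sources_nonadjacent s1 s2 :
  s1 \in sources d -> s2 \in sources d -> ~~ U s1 s2.
Proof.
move=> s1_src s2_src; rewrite UEC_source // inE.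
by apply/andP=> [[/eqP neq_s /(connect_source s2_src)]].
Qed.

Lemma clique_sub_desc C s :
  is_clique U C -> s \in sources d -> s \in C -> C \subset desc d s.
Proof.
move=> C_clique s_src sC; apply/subsetP=> y yC; have [<- | neq_sy] := eqVneq s y.
  by rewrite inE connect0.
by have := C_clique s y sC yC neq_sy; rewrite UEC_source // => /andP[].
Qed.

Lemma desc_sources_edge_clique_cover : edge_clique_cover U (desc d @: sources d).
Proof.
split.
- move=> _ /imsetP[s s_src ->] x y; rewrite !inE => sx sy neq_xy.
  by rewrite UE neq_xy; apply/existsP; exists s; rewrite sx sy.
- move=> x; have [s s_src sx] := exists_source d_acyclic x.
  by exists (desc d s); [apply: imset_f | rewrite inE].
move=> x y; rewrite UE common_ancestor_sources // => /andP[_ /exists_inP[s s_src sxy]].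
by exists (desc d s); [apply: imset_f | rewrite !inE].
Qed.

Lemma min_edge_clique_cover_desc E :
  min_edge_clique_cover U E -> E = desc d @: sources d.
Proof.
case=> [[E_clique E_vertex E_edge] E_min].
have card_E : #|E| <= #|sources d|.
  exact: leq_trans (E_min _ desc_sources_edge_clique_cover) (leq_imset_card _ _).
pose h s := odflt set0 [pick C in E | s \in C].
have hE s : h s \in E /\ s \in h s.
  rewrite /h; case: pickP => [C /andP[CE sC] | no_C] //=.
  by have [C CE sC] := E_vertex s; move: (no_C C); rewrite /= CE sC.
have h_inj : {in sources d &, injective h}.
  move=> s1 s2 s1_src s2_src eq_h; apply/eqP.
  apply: contraR (UEC_sources_nonadjacent s1_src s2_src).
  by apply: E_clique (hE s1).1 _ _ (hE s1).2 _; rewrite eq_h (hE s2).2.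
have imh : h @: sources d = E.
  apply/eqP; rewrite eqEcard card_in_imset // card_E andbT.
  by apply/subsetP=> _ /imsetP[s _ ->]; apply: (hE s).1.
have h_sub s : s \in sources d -> h s \subset desc d s.
  by move=> s_src; apply: clique_sub_desc (E_clique _ (hE s).1) s_src (hE s).2.
have h_desc : {in sources d, forall s, h s = desc d s}.
  move=> s s_src; apply/eqP; rewrite eqEsubset h_sub //=.
  apply/subsetP=> y; rewrite inE => sy; have [<- | neq_sy] := eqVneq s y.
    exact: (hE s).2.
  have /E_edge[C] : U s y by rewrite UEC_source // neq_sy inE.
  rewrite -imh => /imsetP[s' s'_src ->] /andP[s's y_s'].
  have := subsetP (h_sub s' s'_src) s s's.
  by rewrite inE => /(connect_source s_src) <-.
by rewrite -imh; apply: eq_in_imset.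
Qed.

End UEC.

Section AddEdge.
Variables (T : finType) (d : rel T) (a b : T).

Lemma connect_add_edge x y :
  connect (add_edge d a b) x y = connect d x y || connect d x a && connect d b y.
Proof.
have sub : subrel (connect d) (connect (add_edge d a b)).
  by apply: connect_sub => u v duv; rewrite connect1 // /add_edge duv.
apply/idP/idP=> [/connectP[p p_xp ->] | /orP[/sub // | /andP[/sub xa /sub b_y]]].
  elim: p x p_xp => [|z p IHp] x /=; first by rewrite connect0.
  case/andP=> /orP[dxz | /andP[/eqP-> /eqP->]] /IHp /orP[zy | /andP[za b_y]].
  - by rewrite (connect_trans (connect1 dxz) zy).
  - by rewrite (connect_trans (connect1 dxz) za) b_y orbT.
  - by rewrite connect0 zy orbT.
  - by rewrite connect0 b_y orbT.
apply: connect_trans xa (connect_trans _ b_y).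
by rewrite connect1 // /add_edge !eqxx orbT.
Qed.

Hypothesis d_acyclic : acyclic d.
Hypothesis not_ba : ~~ connect d b a.
Hypothesis sources_ab : {in sources d, forall s, connect d s a -> connect d s b}.

Lemma acyclic_add_edge : acyclic (add_edge d a b).
Proof.
move=> x y; rewrite connect_add_edge negb_or.
case/orP=> [dxy | /andP[/eqP-> /eqP->]]; last by rewrite (negbTE not_ba).
rewrite d_acyclic //=; apply/negP=> /andP[ya bx].
by case/negP: not_ba; apply: connect_trans bx (connect_trans (connect1 dxy) ya).
Qed.

Lemma common_ancestor_add_edge v w :
  common_ancestor (add_edge d a b) v w = common_ancestor d v w.
Proof.
apply/existsP/existsP=> [[t /andP[tv tw]] | [t /andP[tv tw]]]; last first.
  by exists t; rewrite !connect_add_edge tv tw.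
have [s s_src st] := exists_source d_acyclic t.
have reach y : connect (add_edge d a b) t y -> connect d s y.
  rewrite connect_add_edge => /orP[ty | /andP[ta b_y]]; first exact: connect_trans st ty.
  exact: connect_trans (sources_ab s_src (connect_trans st ta)) b_y.
by exists s; rewrite !reach.
Qed.

End AddEdge.

Lemma inUEC_add_edge (T : finType) (U d : rel T) a b : inUEC U d ->
  ~~ connect d b a -> {in sources d, forall s, connect d s a -> connect d s b} ->
  inUEC U (add_edge d a b).
Proof.
move=> /inUECE[d_acyclic UE] not_ba sources_ab; apply/inUECE.
split; first exact: acyclic_add_edge.
by move=> v w; rewrite common_ancestor_add_edge.
Qed.

Section Maximal.
Variables (T : finType) (U d : rel T).
Hypothesis d_max : maximal_in_UEC U d.

Lemma maximal_in_UEC_edge a b : a != b -> ~~ connect d b a ->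
  {in sources d, forall s, connect d s a -> connect d s b} -> d a b.
Proof.
move=> neq_ab not_ba sources_ab; apply/negPn/negP=> not_ab.
by apply: d_max.2 neq_ab not_ab (inUEC_add_edge d_max.1 not_ba sources_ab).
Qed.

Lemma maximal_in_UEC_parent s a x : s \in sources d -> connect d s x ->
  ~~ connect d s a -> {in sources d, forall s, connect d s a -> connect d s x} -> d a x.
Proof.
move=> s_src sx not_sa sources_ax; apply: maximal_in_UEC_edge => //.
  by apply: contraNneq not_sa => ->.
by apply: contra not_sa; apply: connect_trans sx.
Qed.

Lemma maximal_separating_source v w : v != w -> ~~ adjD d v w ->
  exists2 s, s \in sources d & connect d s v && ~~ connect d s w.
Proof.
move=> neq_vw; rewrite /adjD negb_or => /andP[not_vw not_wv].
have [/exists_inP[s] | no_sep] :=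
  boolP [exists s in sources d, connect d s v && ~~ connect d s w]; first by exists s.
have sources_vw : {in sources d, forall s, connect d s v -> connect d s w}.
  move=> s s_src sv; apply: contraR no_sep => not_sw.
  by apply/exists_inP; exists s; rewrite ?sv.
have [wv | not_wv'] := boolP (connect d w v).
  case/negP: not_wv; apply: maximal_in_UEC_edge; first by rewrite eq_sym.
    by apply: contra neq_vw => vw; apply/eqP/(connect_antisym d_max.1.1).
  by move=> s _ sw; apply: connect_trans sw wv.
by case/negP: not_vw; apply: maximal_in_UEC_edge.
Qed.

End Maximal.

Theorem lemma5p1 (T : finType) (U d : rel T) (E : {set {set T}}) :
  UEC_rep U ->
  maximal_in_UEC U d ->
  min_edge_clique_cover U E ->
  forall v x w : T,
    v_structure d v x w <->
    ((exists C1, exists C2,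
        [/\ C1 \in E, C2 \in E,
            [/\ v \in C1, x \in C1 & w \notin C1]
          & [/\ w \in C2, x \in C2 & v \notin C2]])
     /\ (forall C, C \in E -> (v \in C) || (w \in C) -> x \in C)).
Proof.
move=> _ d_max /(min_edge_clique_cover_desc d_max.1) -> v x w; split.
  case=> neq_vw vx wx not_adj.
  have [s1 s1_src /andP[s1v s1w]] := maximal_separating_source d_max neq_vw not_adj.
  have [s2 s2_src /andP[s2w s2v]] :
      exists2 s, s \in sources d & connect d s w && ~~ connect d s v.
    by apply: (maximal_separating_source d_max); [rewrite eq_sym | rewrite /adjD orbC].
  split.
    exists (desc d s1), (desc d s2); rewrite !imset_f // !inE s1v s1w s2w s2v.
    by rewrite (connect_trans s1v (connect1 vx)) (connect_trans s2w (connect1 wx)).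
  move=> _ /imsetP[s _ ->]; rewrite !inE => /orP[sv | sw].
    exact: connect_trans sv (connect1 vx).
  exact: connect_trans sw (connect1 wx).
case=> [[_ [_ [/imsetP[s1 s1_src ->] /imsetP[s2 s2_src ->]]]]].
rewrite !inE => [[s1v s1x s1w] [s2w s2x s2v]] x_common.
have sources_x s : s \in sources d -> connect d s v || connect d s w -> connect d s x.
  by move=> s_src; have := x_common _ (imset_f (desc d) s_src); rewrite !inE.
split.
- by apply: contraNneq s1w => <-.
- apply: (maximal_in_UEC_parent d_max s2_src s2x s2v) => s s_src sv.
  by rewrite sources_x ?sv.
- apply: (maximal_in_UEC_parent d_max s1_src s1x s1w) => s s_src sw.
  by rewrite sources_x ?sw ?orbT.
rewrite /adjD negb_or; apply/andP; split; apply/negP=> e.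
  by case/negP: s1w; apply: connect_trans s1v (connect1 e).
by case/negP: s2v; apply: connect_trans s2w (connect1 e).
Qed.
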